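(* For $n\ge1$ and $0\le k\le n-1$, the number of plane trees with $n$ edges and exactly $k$ young leaves is $$\binom{n-1}{k}M_{n-k-1},$$ where $M_m=\sum_{r=0}^{\lfloor m/2\rfloor}\binom{m}{2r}C_r$ is the $m$-th Motzkin number and $C_r=\frac{1}{r+1}\binom{2r}{r}$ is the $r$-th Catalan number.
   Context: A plane tree is a rooted tree in which the children of each vertex are linearly ordered (left to right). A leaf is a vertex with no children; by convention the tree consisting of a single vertex (no edges) has no leaves. A leaf is an old leaf if it is the leftmost child of its parent, and a young leaf otherwise. The Motzkin number $M_m$ equals the number of lattice paths from $(0,0)$ to $(m,0)$ with steps $(1,1),(1,-1),(1,0)$ never going below the $x$-axis. *)

From mathcomp Require Import all_boot.
Set Implicit Arguments. Unset Strict Implicit. Unset Printing Implicit Defensive.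

Inductive ptree : Type := Node of seq ptree.

Fixpoint edges (t : ptree) : nat :=
  let: Node ts := t in size ts + sumn (map edges ts).

Definition childless (t : ptree) : bool :=
  if t is Node [::] then true else false.

(* Young leaves: leaves that are children of some vertex but not its
   leftmost child.  Only children are counted, so the one-vertex tree
   (whose root has no parent) has no leaves, per the paper's convention. *)
Fixpoint young_leaves (t : ptree) : nat :=
  let: Node ts := t in count childless (behead ts) + sumn (map young_leaves ts).

Definition catalan (r : nat) : nat := 'C(r.*2, r) %/ r.+1.
Definition motzkin (m : nat) : nat :=
  \sum_(r < (m./2).+1) 'C(m, 2 * r) * catalan r.

From HB Require Import structures.
From mathcomp Require Import all_boot zify.
Set Implicit Arguments. Unset Strict Implicit. Unset Printing Implicit Defensive.

(* A word of n - 1 steps is decoded, from its last letter to its first, into a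
   stack of plane trees, starting from the one-edge tree: Young adds a leaf as
   the rightmost child of the root of the top tree, Flat puts the top tree
   under a new root, Up grafts the second tree as the rightmost subtree of the
   root of the top tree, and Down pushes a new one-edge tree.  The stack
   height traces a Motzkin path, Young steps create exactly the young leaves,
   and the rightmost child of the top tree tells which step came last; so the
   trees with n edges and k young leaves correspond to the Motzkin paths of
   length n - 1 with k flat steps recoloured Young.  Placing those gives
   'C(n - 1, k) times the Motzkin paths of length m = n - k - 1, and choosing
   the 2r non-flat positions of such a path and a Dyck path on them gives
   M_m = sum_r 'C(m, 2r) C_r, the Dyck paths being counted by ballot numbers. *)

Inductive step := Young | Flat | Up | Down.

Definition eq_step (s1 s2 : step) : bool :=
  match s1, s2 with
  | Young, Young | Flat, Flat | Up, Up | Down, Down => true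
  | _, _ => false
  end.

Lemma eq_stepP : Equality.axiom eq_step.
Proof. by do 2!case; constructor. Qed.

HB.instance Definition _ := hasDecEq.Build step eq_stepP.

Definition leaf : ptree := Node [::].
Definition stem (t : ptree) : ptree := Node [:: t].
Definition graft (t u : ptree) : ptree := let: Node ts := t in Node (rcons ts u).
Definition nontrivial (t : ptree) : bool := ~~ childless t.

Lemma edges_graft t u : edges (graft t u) = edges t + edges u + 1.
Proof. by case: t => ts /=; rewrite size_rcons map_rcons sumn_rcons; lia. Qed.

Lemma young_leaves_graft t u : nontrivial t ->
  young_leaves (graft t u) = young_leaves t + young_leaves u + childless u.
Proof.
case: t => [[|c cs]] //= _.
by rewrite map_rcons sumn_rcons -cats1 count_cat /=; lia.
Qed.

Lemma graft_inj t u t' u' : graft t u = graft t' u' -> t = t' /\ u = u'.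
Proof. by case: t t' => [ts] [ts'] [/rcons_inj [-> ->]]. Qed.

Lemma nontrivial_graft t u : nontrivial (graft t u).
Proof. by case: t => [[]]. Qed.

Lemma nontrivial_edges t : nontrivial t = (0 < edges t).
Proof. by case: t => [[]]. Qed.

(* One decoding step on a stack of trees (head = top); the junk value [::]
   appears only when the stack is too short, see [pushable]. *)
Definition push (s : step) (f : seq ptree) : seq ptree :=
  match s, f with
  | Young, t :: f' => graft t leaf :: f'
  | Flat, t :: f' => stem t :: f'
  | Up, t :: u :: f' => graft t u :: f'
  | Down, _ => stem leaf :: f
  | _, _ => [::]
  end.

Definition pushable (s : step) (f : seq ptree) : bool := (s == Up) < size f.

Definition decode (w : seq step) : seq ptree := foldr push [:: stem leaf] w.

Definition top_step (t : ptree) : step :=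
  let: Node ts := t in
  if ts is [:: c] then if childless c then Down else Flat
  else if childless (last leaf ts) then Young else Up.

Lemma top_step_graft t u : nontrivial t ->
  top_step (graft t u) = if childless u then Young else Up.
Proof. by case: t => [[|c cs]] //= _; rewrite last_rcons; case: cs. Qed.

Lemma push_edges s f : pushable s f ->
  sumn (map edges (push s f)) = (sumn (map edges f)).+1.
Proof.
by rewrite /pushable; case: s f => [] [|t [|u f']] //= _; rewrite ?edges_graft /=; lia.
Qed.

Lemma push_young_leaves s f : pushable s f -> all nontrivial f ->
  sumn (map young_leaves (push s f)) = sumn (map young_leaves f) + (s == Young).
Proof.
rewrite /pushable; case: s f => [] [|t [|u f']] //= _ /andP[nt nf];
  rewrite ?young_leaves_graft //=; try case/andP: nf => /negbTE-> _; lia.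
Qed.

Lemma top_step_push s f : pushable s f -> all nontrivial f ->
  top_step (head leaf (push s f)) = s.
Proof.
rewrite /pushable; case: s f => [] [|t [|u f']] //= _ /andP[nt nf];
  rewrite ?top_step_graft //= ?(negbTE nt) //.
by case/andP: nf => /negbTE->.
Qed.

Lemma push_nontrivial s f : all nontrivial f -> all nontrivial (push s f).
Proof.
case: s f => [] [|t [|u f']] //= /andP[nt]; rewrite ?nontrivial_graft ?nt //=.
by case/andP.
Qed.

Lemma push_inj s f1 f2 : pushable s f1 -> pushable s f2 ->
  push s f1 = push s f2 -> f1 = f2.
Proof.
rewrite /pushable; case: s f1 f2 => [] [|t1 [|u1 f1]] [|t2 [|u2 f2]] //= _ _ [];
  by repeat (move=> /graft_inj[] || move=> -> || move=> _).
Qed.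

Lemma childless_leaf t : childless t -> t = leaf.
Proof. by case: t => [[]]. Qed.

Lemma push_preimage t f : nontrivial t -> all nontrivial f ->
  1 < sumn (map edges (t :: f)) ->
  exists s f', [/\ push s f' = t :: f, pushable s f' & all nontrivial f'].
Proof.
case: t => cs; case/lastP: cs => [|[|c p] x] // _ nf ne.
  case: (boolP (nontrivial x)) => [nx|/negPn/childless_leaf ex].
    by exists Flat, (x :: f); rewrite /= nx.
  by exists Down, f; case: f ne nf => [|u f]; rewrite ex.
have -> : Node (rcons (c :: p) x) = graft (Node (c :: p)) x by [].
case: (boolP (nontrivial x)) => [nx|/negPn/childless_leaf ->].
  by exists Up, (Node (c :: p) :: x :: f); rewrite /= nx.
by exists Young, (Node (c :: p) :: f).
Qed.

Fixpoint motzkin_path (h : nat) (w : seq step) : bool :=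
  if w is s :: w' then
    match s with
    | Up => motzkin_path h.+1 w'
    | Down => if h is h'.+1 then motzkin_path h' w' else false
    | _ => motzkin_path h w'
    end
  else h == 0.

Lemma motzkin_path_tail h s w : motzkin_path h (s :: w) ->
  exists2 h', motzkin_path h' w & (s == Up) < h'.+1.
Proof. by case: s => /=; [exists h..|exists h.+1|case: h => // h; exists h]. Qed.

Lemma decode_shape h w : motzkin_path h w ->
  size (decode w) = h.+1 /\ all nontrivial (decode w).
Proof.
elim: w h => [|s w IH] h /=; first by move/eqP->.
move=> p; split; last first.
  by have [h' /IH[_ nf] _] := motzkin_path_tail p; apply: push_nontrivial.
by case: s p => /=; [move/IH..|case: h => // h /IH];
  case: (decode w) => [|t [|u f]] [] //= [->].
Qed.

Lemma decode_pushable h s w : motzkin_path h (s :: w) -> pushable s (decode w).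
Proof. by rewrite /pushable; case/motzkin_path_tail=> h' /decode_shape[->]. Qed.

Lemma decode_weights h w : motzkin_path h w ->
  sumn (map edges (decode w)) = (size w).+1 /\
  sumn (map young_leaves (decode w)) = count_mem Young w.
Proof.
elim: w h => [|s w IH] h p //=.
have [h' /[dup] p' /IH[eE eY] _] := motzkin_path_tail p.
have fits := decode_pushable p; have [_ nf] := decode_shape p'.
by rewrite push_edges // push_young_leaves // eE eY addnC eq_sym.
Qed.

Lemma decode_inj h1 h2 w1 w2 : motzkin_path h1 w1 -> motzkin_path h2 w2 ->
  decode w1 = decode w2 -> w1 = w2.
Proof.
move=> p1 p2 e; have : size w1 = size w2.
  by apply: succn_inj; rewrite -(decode_weights p1).1 -(decode_weights p2).1 e.
elim: w1 h1 w2 h2 p1 p2 e => [|s1 w1 IH] h1 [|s2 w2] h2 p1 p2 /= e // [sz].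
have [h1' p1' _] := motzkin_path_tail p1; have [h2' p2' _] := motzkin_path_tail p2.
have [fit1 fit2] := (decode_pushable p1, decode_pushable p2).
have [[_ nf1] [_ nf2]] := (decode_shape p1', decode_shape p2').
have es : s1 = s2.
  by rewrite -(top_step_push fit1 nf1) -(top_step_push fit2 nf2) e.
move: e fit2; rewrite -es => e fit2.
by rewrite (IH _ _ _ p1' p2' (push_inj fit1 fit2 e)).
Qed.

Lemma motzkin_path_push s f w : pushable s f ->
  motzkin_path (size f).-1 w -> motzkin_path (size (push s f)).-1 (s :: w).
Proof. by rewrite /pushable; case: s f => [] [|t [|u f]]. Qed.

Lemma edges_eq1 t : edges t = 1 -> t = stem leaf.
Proof. by case: t => [[|[[|? ?]] [|? ?]]] //=; rewrite addnS. Qed.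

Lemma decode_onto f : all nontrivial f -> f <> [::] ->
  exists2 w, motzkin_path (size f).-1 w & decode w = f.
Proof.
have [n] := ubnP (sumn (map edges f)); elim: n f => // n IH [//|t f] weight.
move=> /andP[nt nf] _.
case: (ltnP 1 (sumn (map edges (t :: f)))) => [big|small].
  have [s [f' [ef' fits nf']]] := push_preimage nt nf big.
  have [||w p ew] := IH f' _ nf'.
  - by move: weight; rewrite -ef' push_edges.
  - by case: f' fits {ef' nf'}; rewrite /pushable.
  by exists (s :: w); rewrite -ef' ?motzkin_path_push //= ew.
have ef : f = [::].
  case: f nf small {weight} => // u f /andP[nu _].
  by move: nt nu; rewrite /= !nontrivial_edges; lia.
move: small; rewrite ef /= addn0 => small.
have et : edges t = 1 by move: nt; rewrite nontrivial_edges; lia.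
by exists [::]; rewrite // (edges_eq1 et).
Qed.

Fixpoint motzkin_words (L h : nat) : seq (seq step) :=
  if L is L'.+1 then
    [seq Young :: w | w <- motzkin_words L' h] ++
    [seq Flat :: w | w <- motzkin_words L' h] ++
    [seq Up :: w | w <- motzkin_words L' h.+1] ++
    (if h is h'.+1 then [seq Down :: w | w <- motzkin_words L' h'] else [::])
  else if h == 0 then [:: [::]] else [::].

Lemma mem_map_cons (T : eqType) (a : T) (s : seq (seq T)) w :
  (w \in [seq a :: v | v <- s]) = if w is b :: v then (b == a) && (v \in s) else false.
Proof.
case: w => [|b v]; first by apply/mapP=> [[]].
by apply/mapP/andP=> [[v' vs [-> ->]] | [/eqP-> vs]]; [|exists v].
Qed.

Lemma mem_motzkin_words L h w :
  (w \in motzkin_words L h) = (size w == L) && motzkin_path h w.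
Proof.
elim: L h w => [|L IH] h [|s w] /=; rewrite ?mem_cat ?mem_map_cons; try by case: h.
  by case: h => [|h]; rewrite ?mem_map_cons.
by case: s; case: h => [|h]; rewrite ?mem_map_cons ?IH ?in_nil ?eqSS ?orbF ?andbF.
Qed.

Lemma uniq_motzkin_words L h : uniq (motzkin_words L h).
Proof.
elim: L h => [|L IH] h /=; first by case: h.
have uniq_cons a s : uniq s -> uniq [seq a :: v | v <- s].
  by rewrite map_inj_uniq // => ? ? [].
have apart a b s t : a != b ->
    has (fun w => w \in [seq a :: v | v <- s]) [seq b :: v | v <- t] = false.
  move=> ab; apply/negbTE/hasPn=> _ /mapP[v _ ->].
  by rewrite mem_map_cons eq_sym (negbTE ab).
rewrite !cat_uniq !has_cat !uniq_cons ?apart //=.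
by case: h => [|h] //=; rewrite ?apart ?uniq_cons.
Qed.

Fixpoint motzkin_count (m h : nat) : nat :=
  if m is m'.+1 then
    motzkin_count m' h + motzkin_count m' h.+1 +
    (if h is h'.+1 then motzkin_count m' h' else 0)
  else h == 0.

Lemma count_young_motzkin_words L k h :
  count (fun w => count_mem Young w == k) (motzkin_words L h) =
  'C(L, k) * motzkin_count (L - k) h.
Proof.
pose young j (w : seq step) := count_mem Young w == j.
have other_first a j s : a != Young ->
    count (young j) [seq a :: w | w <- s] = count (young j) s.
  by move=> aY; rewrite count_map; apply: eq_count => w; rewrite /young /= (negbTE aY).
have young_first j s : count (young j) [seq Young :: w | w <- s] =
    if j is j'.+1 then count (young j') s else 0.
  rewrite count_map; case: j => [|j]; last exact: eq_count.
  by rewrite (@eq_count _ _ pred0) ?count_pred0.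
elim: L k h => [|L IH] k h; first by case: h; case: k.
have drop_top j : 'C(L, j.+1) * motzkin_count (L - j) h = 'C(L, j.+1) *
    (motzkin_count (L - j.+1) h + motzkin_count (L - j.+1) h.+1 +
     if h is h'.+1 then motzkin_count (L - j.+1) h' else 0).
  by case: (ltnP j L) => jL; [rewrite -(subnSK jL) | rewrite bin_small ?muln0].
rewrite /= !count_cat young_first !other_first //.
case: k => [|k]; case: h drop_top => [|h] drop_top;
  rewrite ?other_first //= !IH ?bin0 ?subn0 ?subSS ?binS ?mulnDl ?drop_top /=; lia.
Qed.

Fixpoint dyck_count (j h : nat) : nat :=
  if j is j'.+1 then
    dyck_count j' h.+1 + (if h is h'.+1 then dyck_count j' h' else 0)
  else h == 0.

Lemma sum_binomialS m (F : nat -> nat) :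
  \sum_(0 <= j < m.+2) 'C(m.+1, j) * F j =
  \sum_(0 <= j < m.+1) 'C(m, j) * (F j + F j.+1).
Proof.
under [RHS]eq_bigr do rewrite mulnDr.
rewrite big_split /= big_nat_recl // bin0 mul1n.
under eq_bigr do rewrite binS mulnDl.
rewrite big_split /= addnA [X in X + _ = _]addnC; congr (_ + _).
rewrite [RHS]big_nat_recl // big_nat_recr //= bin0 bin_small //.
by rewrite mul0n addn0 mul1n addnC.
Qed.

Lemma motzkin_count_binomial m h :
  motzkin_count m h = \sum_(0 <= j < m.+1) 'C(m, j) * dyck_count j h.
Proof.
elim: m h => [|m IH] h; first by rewrite big_nat1 mul1n.
rewrite sum_binomialS; case: h => [|h] /=; rewrite !IH -!big_split /=;
  by rewrite ?addn0; apply: eq_bigr => j _; rewrite !mulnDr; lia.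
Qed.

Lemma dyck_count_small j h : j < h -> dyck_count j h = 0.
Proof. by elim: j h => [|j IH] [|h] //= jh; rewrite !IH //; lia. Qed.

Lemma dyck_count_odd j h : odd (j + h) -> dyck_count j h = 0.
Proof.
elim: j h => [|j IH] [|h] //=; rewrite ?addn0 => o; first by rewrite IH ?addn1.
have {}o : odd (j + h) by move: o; rewrite addnS /= negbK.
by rewrite !IH // !addnS /= negbK.
Qed.

(* The ballot numbers 'C(j, d) - 'C(j, d - 1), stated without truncated
   subtraction. *)
Lemma dyck_count_ballot j h d : j = h + d.*2 ->
  dyck_count j h + (if d is d'.+1 then 'C(j, d') else 0) = 'C(j, d).
Proof.
elim: j h d => [|j IH] h d; first by case: h; case: d.
case: h => [|h] jd.
- case: d jd => [|d] // jd.
  have /IH : j = 1 + d.*2 by lia.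
  have sym : 'C(j, d.+1) = 'C(j, d).
    by rewrite -bin_sub; [congr 'C(_, _)|]; lia.
  by rewrite /= binS sym; case: d {jd sym} => [|d]; rewrite ?bin0 ?binS; lia.
- case: d jd => [|d] jd /=.
    have := IH h 0; rewrite !bin0 (@dyck_count_small j h.+2); lia.
  have := IH h.+2 d ltac:(lia); have := IH h d.+1 ltac:(lia).
  by case: d {jd} => [|d]; rewrite ?binS ?bin0 /=; lia.
Qed.

Lemma dyck_count_catalan r : dyck_count r.*2 0 = catalan r.
Proof.
rewrite /catalan; case: r => [|r] //.
have := dyck_count_ballot (erefl (0 + r.+1.*2)); rewrite add0n => ballot.
have := mul_bin_left r.+1.*2 r; rewrite (_ : r.+1.*2 - r = r.+2); last by lia.
move=> shift; suff -> : 'C(r.+1.*2, r.+1) = dyck_count r.+1.*2 0 * r.+2.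
  by rewrite mulnK.
nia.
Qed.

Lemma sum_double K (F : nat -> nat) :
  \sum_(0 <= j < K.*2) F j = \sum_(0 <= r < K) (F r.*2 + F r.*2.+1).
Proof.
elim: K => [|K IH]; first by rewrite !big_geq.
by rewrite doubleS !big_nat_recr //= IH addnA.
Qed.

Lemma motzkin_count_ground m : motzkin_count m 0 = motzkin m.
Proof.
rewrite motzkin_count_binomial /motzkin.
rewrite -(big_mkord xpredT (fun r => 'C(m, 2 * r) * catalan r)).
have m_le : m.+1 <= (m./2).+1.*2 by have := odd_double_half m; case: (odd m) => /=; lia.
transitivity (\sum_(0 <= j < (m./2).+1.*2) 'C(m, j) * dyck_count j 0).
  rewrite (big_cat_nat (leq0n _) m_le) /= [X in _ = _ + X]big1_seq ?addn0 //.
  by move=> j /andP[_]; rewrite mem_index_iota => /andP[mj _]; rewrite bin_small.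
rewrite sum_double; apply: eq_bigr => r _.
by rewrite dyck_count_catalan dyck_count_odd ?muln0 ?addn0 ?mul2n //= odd_double.
Qed.

Lemma enumerate_image (T : eqType) (U : Type) (x0 : T) (g : T -> U) (s : seq T) N :
  uniq s -> size s = N -> {in s &, injective g} ->
  exists f : 'I_N -> U, injective f /\
    forall y, (exists2 x, x \in s & g x = y) <-> exists i, f i = y.
Proof.
move=> s_uniq <- g_inj; exists (fun i => g (nth x0 s i)); split.
  move=> i j e; apply/val_inj/eqP.
  rewrite -(nth_uniq x0 (ltn_ord i) (ltn_ord j) s_uniq).
  by apply/eqP/g_inj; rewrite // mem_nth.
move=> y; split=> [[x xs <-]|[i <-]]; last by exists (nth x0 s i); rewrite ?mem_nth.
by exists (Ordinal (etrans (index_mem x s) xs)); rewrite /= nth_index.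
Qed.

Lemma decode_ground w : motzkin_path 0 w -> decode w = [:: head leaf (decode w)].
Proof. by case/decode_shape; case: (decode w) => [|t []]. Qed.

Definition tree_code (n k : nat) : seq (seq step) :=
  [seq w <- motzkin_words (n - 1) 0 | count_mem Young w == k].

Lemma size_tree_code n k : size (tree_code n k) = 'C(n - 1, k) * motzkin (n - k - 1).
Proof.
by rewrite size_filter count_young_motzkin_words motzkin_count_ground subnAC.
Qed.

Lemma mem_tree_code n k w : (w \in tree_code n k) =
  [&& count_mem Young w == k, size w == n - 1 & motzkin_path 0 w].
Proof. by rewrite mem_filter mem_motzkin_words. Qed.

Lemma tree_code_inj n k :
  {in tree_code n k &, injective (fun w => head leaf (decode w))}.
Proof.
move=> w1 w2; rewrite !mem_tree_code => /and3P[_ _ p1] /and3P[_ _ p2] e.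
by apply: (decode_inj p1 p2); rewrite decode_ground // [RHS]decode_ground // e.
Qed.

Lemma tree_codeP n k t : 0 < n -> (edges t = n /\ young_leaves t = k) <->
  exists2 w, w \in tree_code n k & head leaf (decode w) = t.
Proof.
move=> n_gt0; split=> [[et yt]|[w]]; last first.
  rewrite mem_tree_code => /and3P[/eqP yw /eqP sw pw] <-.
  have [] := decode_weights pw; rewrite decode_ground //= !addn0 sw yw.
  by split; first lia.
have nt : nontrivial t by rewrite nontrivial_edges et.
have [||w pw dw] := @decode_onto [:: t]; rewrite /= ?nt //.
exists w; last by rewrite dw.
have [] := decode_weights pw; rewrite dw /= !addn0 et yt => e_sz ->.
by rewrite mem_tree_code pw e_sz subn1 !eqxx.
Qed.

Theorem mainTheorem4 (n k : nat) (hn : 1 <= n) (hk : k <= n - 1) :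
  exists f : 'I_('C(n - 1, k) * motzkin (n - k - 1)) -> ptree,
    injective f /\
    (forall t : ptree,
        (edges t = n /\ young_leaves t = k) <-> exists i, f i = t).
Proof.
have [f [f_inj f_onto]] := enumerate_image [::] (filter_uniq _ (uniq_motzkin_words _ _))
  (size_tree_code n k) (@tree_code_inj n k).
by exists f; split=> // t; rewrite tree_codeP.
Qed.
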